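(* Let $\mu$ be a locally finite Borel measure on $\mathbb{R}$. Then $\mu$ is absolutely decaying if and only if it is both Federer and efd.
   Context: $B(x,\rho)$ denotes the closed ball of radius $\rho$ about $x$. $\mu$ is $(C,\gamma)$-absolutely decaying ($C,\gamma>0$) if there is $\rho_0>0$ such that for all $0<\rho\le\rho_0$, $x\in\operatorname{supp}\mu$, $y\in\mathbb{R}$, $\varepsilon>0$: $\mu(B(x,\rho)\cap B(y,\varepsilon\rho))<C\varepsilon^\gamma\mu(B(x,\rho))$; $\mu$ is absolutely decaying if it is $(C,\gamma)$-absolutely decaying for some $C,\gamma>0$. $\mu$ is Federer (resp. efd) if there exist $\rho_0>0$ and $0<\varepsilon,\delta<1$ such that for every $0<\rho\le\rho_0$ and every $x\in\operatorname{supp}\mu$, the ratio $\mu(B(x,\varepsilon\rho))/\mu(B(x,\rho))$ is at least (resp. at most) $\delta$. *)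

From HB Require Import structures.
From mathcomp Require Import all_boot all_order all_algebra.
From mathcomp Require Import all_classical all_reals all_analysis.
Set Implicit Arguments. Unset Strict Implicit. Unset Printing Implicit Defensive.
Import Order.TTheory GRing.Theory Num.Theory.
Import numFieldNormedType.Exports.
Local Open Scope classical_set_scope.
Local Open Scope ring_scope.

(* Borel measures on the real line R (R : realType carries its Borel
   sigma-algebra as canonical measurable structure). *)

Definition cball (R : realType) (x r : R) : set R := [set z | `|x - z| <= r].

Definition supp (R : realType) (mu : {measure set R -> \bar R}) : set R :=
  [set x | forall U : set R, open U -> U x -> (0 < mu U)%E].

Definition locally_finite (R : realType) (mu : {measure set R -> \bar R}) :=
  forall x : R, exists2 U : set R, nbhs x U & (mu U < +oo)%E.

Definition abs_decaying_with (R : realType) (mu : {measure set R -> \bar R})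
  (C gam : R) :=
  exists2 rho0 : R, 0 < rho0 &
    forall rho x y eps : R, 0 < rho -> rho <= rho0 -> supp mu x -> 0 < eps ->
      (mu (cball x rho `&` cball y (eps * rho))
        < (C * powR eps gam)%:E * mu (cball x rho))%E.

Definition abs_decaying (R : realType) (mu : {measure set R -> \bar R}) :=
  exists C gam : R, [/\ 0 < C, 0 < gam & abs_decaying_with mu C gam].

Definition federer (R : realType) (mu : {measure set R -> \bar R}) :=
  exists rho0 eps delta : R,
    [/\ 0 < rho0, 0 < eps < 1, 0 < delta < 1 &
      forall rho x : R, 0 < rho -> rho <= rho0 -> supp mu x ->
        delta <= fine (mu (cball x (eps * rho))) / fine (mu (cball x rho))].

Definition efd (R : realType) (mu : {measure set R -> \bar R}) :=
  exists rho0 eps delta : R,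
    [/\ 0 < rho0, 0 < eps < 1, 0 < delta < 1 &
      forall rho x : R, 0 < rho -> rho <= rho0 -> supp mu x ->
        fine (mu (cball x (eps * rho))) / fine (mu (cball x rho)) <= delta].

From HB Require Import structures.
From mathcomp Require Import all_boot all_order all_algebra.
From mathcomp Require Import all_classical all_reals all_analysis.
From mathcomp Require Import ring lra measurable_realfun.
Set Implicit Arguments. Unset Strict Implicit. Unset Printing Implicit Defensive.
Import Order.TTheory GRing.Theory Num.Theory.
Import numFieldNormedType.Exports.
Local Open Scope classical_set_scope.
Local Open Scope ring_scope.

(* Write m(x, r) for the measure of the closed ball B(x, r) about a support
   point x.  If mu is absolutely decaying, a small eta makes every
   B(x, r) ∩ B(y, eta r) carry at most m(x, r) / 4.  Covering B(x, r) by
   B(x, (1 - eta) r) and two such pieces at the endpoints x ± r gives the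
   Federer property; the piece y = x gives efd.

   Conversely, iterating efd gives m(z, eE^k t) <= dE^k m(z, t), and iterating
   the Federer property gives m(x, 3 rho) <= dF^-n m(x, rho) once eF^n <= 1/3.
   A support point z of B(x, rho) ∩ B(y, eps rho) puts this set inside
   B(z, 2 eps rho), and B(z, 2 rho) inside B(x, 3 rho); choosing k with
   eE^(k+1) < eps <= eE^k yields decay with exponent ln dE / ln eE.  Without a
   support point, the compact set B(x, rho) ∩ B(y, eps rho) is null.

   Each side already forces balls about support points to have finite measure. *)

Lemma exists_expr_lt (R : realType) (a b : R) :
  0 <= a < 1 -> 0 < b -> exists n : nat, a ^+ n < b.
Proof.
move=> /andP[a0 a1] b0; rewrite -(ger0_norm a0) in a1.
have /cvgr0Pnorm_lt /(_ b b0) [N _ aN] := cvg_expr a1.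
by exists N; have := aN N (leqnn N); rewrite /= ger0_norm// exprn_ge0.
Qed.

Lemma exists_powR_le (R : realType) (C gam c : R) : 0 < C -> 0 < gam -> 0 < c ->
  exists2 eta : R, 0 < eta <= 2^-1 & C * eta `^ gam <= c.
Proof.
move=> C0 gam0 c0; set t := (c / C) `^ gam^-1.
have t0 : 0 < t by rewrite powR_gt0// divr_gt0.
have eta0 : 0 < Num.min 2^-1 t by rewrite lt_min t0 andbT invr_gt0.
exists (Num.min 2^-1 t); first by rewrite eta0 ge_min lexx.
rewrite mulrC -ler_pdivlMr//; apply: (@le_trans _ _ (t `^ gam)).
  by apply: ge0_ler_powR; rewrite ?nnegrE ?ge_min ?lexx ?orbT// ltW.
by rewrite /t -powRrM mulVf ?gt_eqF// powRr1// ltW// divr_gt0.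
Qed.

Lemma powR_ln_ratio (R : realType) (a b : R) : 0 < a < 1 -> 0 < b -> a `^ (ln b / ln a) = b.
Proof.
move=> /andP[a0 a1] b0; have lna : ln a < 0 by rewrite ln_lt0// a0.
by rewrite /powR gt_eqF// divfK ?lt_eqF// lnK.
Qed.

Lemma ln_ratio_gt0 (R : realType) (a b : R) : 0 < a < 1 -> 0 < b < 1 -> 0 < ln b / ln a.
Proof.
move=> /andP[a0 a1] /andP[b0 b1].
by rewrite -mulrNN -invrN divr_gt0// oppr_gt0 ln_lt0// ?a0 ?b0.
Qed.

(* Raise a ^+ k.+1 < eps to the power ln b / ln a, which sends a to b. *)
Lemma expr_le_powR_ln_ratio (R : realType) (a b eps : R) (k : nat) :
  0 < a < 1 -> 0 < b < 1 -> 0 < eps -> a ^+ k.+1 < eps ->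
  b ^+ k <= eps `^ (ln b / ln a) / b.
Proof.
move=> a01 b01 eps0 ak; have /andP[a0 _] := a01; have /andP[b0 _] := b01.
have : b ^+ k.+1 <= eps `^ (ln b / ln a).
  rewrite -[b in b ^+ _](powR_ln_ratio a01 b0) -powR_mulrn ?powR_ge0// powRAC.
  rewrite powR_mulrn; last exact: ltW.
  apply/ltW/gt0_ltr_powR; rewrite ?ln_ratio_gt0// nnegrE ?exprn_ge0//; exact: ltW.
by rewrite exprS ler_pdivlMr// mulrC.
Qed.

Lemma exists_expr_bracket (R : realType) (a eps : R) : 0 < a < 1 -> 0 < eps < 1 ->
  exists k : nat, a ^+ k.+1 < eps <= a ^+ k.
Proof.
move=> /andP[a0 a1] /andP[eps0 eps1].
have [|n an nmin] := ex_minnP (@exists_expr_lt R a eps _ eps0); first by rewrite ltW.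
case: n an nmin => [|k] ak kmin; first by move: ak; rewrite expr0; lra.
by exists k; rewrite ak leNgt; apply/negP => /kmin; rewrite ltnn.
Qed.

Section closed_balls.
Variable R : realType.
Implicit Types x z r s : R.

Lemma cballE x r : cball x r = `[x - r, x + r]%classic.
Proof. by apply/seteqP; split => z /=; rewrite /cball in_itv /= ler_distl; lra. Qed.

Lemma measurable_cball x r : measurable (cball x r).
Proof. by rewrite cballE; exact: measurable_itv. Qed.

Lemma compact_cball x r : compact (cball x r).
Proof. by rewrite cballE; exact: segment_compact. Qed.

Lemma closed_cball x r : closed (cball x r).
Proof. by rewrite cballE; exact: interval_closed. Qed.

Lemma cball_sub x z r s : `|x - z| + r <= s -> cball z r `<=` cball x s.
Proof.
move=> h w; rewrite /cball /= => hw; apply: le_trans h.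
by rewrite (le_trans (ler_distD z _ _))// lerD2l.
Qed.

Lemma cball_subr x r s : r <= s -> cball x r `<=` cball x s.
Proof. by move=> rs; apply: cball_sub; rewrite subrr normr0 add0r. Qed.

Lemma cball_cover_ends x r eta :
  cball x r `<=` cball x ((1 - eta) * r) `|`
    (cball x r `&` cball (x + r) (eta * r) `|` cball x r `&` cball (x - r) (eta * r)).
Proof.
move=> z; rewrite /cball /= !ler_distl => /andP[zl zr].
have [zl'|zl'] := lerP (x - (1 - eta) * r) z; last first.
  by right; right; split; apply/andP; split; lra.
have [zr'|zr'] := lerP z (x + (1 - eta) * r); last first.
  by right; left; split; apply/andP; split; lra.
by left; apply/andP; split; lra.
Qed.

End closed_balls.

Section measure_of_balls.
Variables (R : realType) (mu : {measure set R -> \bar R}).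
Implicit Types x r : R.

Lemma fin_num_measureS (A B : set R) : measurable A -> measurable B -> A `<=` B ->
  (mu B < +oo)%E -> mu A \is a fin_num.
Proof.
move=> mA mB AB Bfin; rewrite ge0_fin_numE//.
by apply: le_lt_trans Bfin; apply: le_measure; rewrite ?inE.
Qed.

Lemma fine_measure_le (A B : set R) : measurable A -> measurable B -> A `<=` B ->
  (mu B < +oo)%E -> fine (mu A) <= fine (mu B).
Proof.
move=> mA mB AB Bfin; apply: fine_le; first exact: (fin_num_measureS mA mB AB).
  by rewrite ge0_fin_numE.
by apply: le_measure; rewrite ?inE.
Qed.

Lemma cball_supp_gt0 x r : supp mu x -> 0 < r -> (0 < mu (cball x r))%E.
Proof.
move=> sx r0; apply: (lt_le_trans (sx _ (ball_open x r) (ballxx x r0))).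
apply: le_measure; rewrite ?inE.
- by apply: open_measurable; exact: ball_open.
- exact: measurable_cball.
- by move=> z; rewrite -ball_normE /ball_ /cball /= => /ltW.
Qed.

Lemma compact_measure0 (A : set R) : compact A -> measurable A ->
  (forall z, A z -> ~ supp mu z) -> mu A = 0%E.
Proof.
move=> + mA Anosupp; rewrite compact_cover => /(_ _ [set U | open U /\ mu U = 0%E] id).
case.
- by move=> U [].
- move=> z /Anosupp /existsNP[U /not_implyP[oU /not_implyP[Uz /negP]]].
  rewrite -leNgt => U0; exists U => //; split => //.
  by apply/eqP; rewrite eq_le U0 measure_ge0.
move=> D DN Acov; apply/eqP; rewrite -measure_le0.
apply: le_trans (content_sub_fsum _ (finite_fset D) _ mA Acov) _.
  by move=> U /DN/set_mem[oU _]; exact: open_measurable.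
by rewrite fsbig1// => U /DN/set_mem[].
Qed.

End measure_of_balls.

Section absolute_decay.
Variables (R : realType) (mu : {measure set R -> \bar R}) (C gam rho0 : R).
Hypotheses (C0 : 0 < C) (gam0 : 0 < gam) (rho00 : 0 < rho0).
Hypothesis abs_decay : forall rho x y eps : R,
  0 < rho -> rho <= rho0 -> supp mu x -> 0 < eps ->
  (mu (cball x rho `&` cball y (eps * rho)) < (C * powR eps gam)%:E * mu (cball x rho))%E.

Local Notation mass x r := (fine (mu (cball x r))).

(* The case eps = 1, y = x of the decay bound reads mu B < C mu B. *)
Lemma abs_decay_cball_lty rho x : 0 < rho -> rho <= rho0 -> supp mu x ->
  (mu (cball x rho) < +oo)%E.
Proof.
move=> rho0' rhor sx; have := abs_decay x rho0' rhor sx ltr01.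
rewrite mul1r setIid powR1 mulr1.
by case: (mu (cball x rho)) => [r| |] //; rewrite ?ltry// mulry gtr0_sg// mul1e ltxx.
Qed.

Lemma abs_decay_mass_gt0 rho x : 0 < rho -> rho <= rho0 -> supp mu x -> 0 < mass x rho.
Proof.
move=> rho0' rhor sx; have := cball_supp_gt0 sx rho0'.
by have := abs_decay_cball_lty rho0' rhor sx; case: (mu (cball x rho)).
Qed.

Lemma abs_decay_quarter : exists2 eta : R, 0 < eta <= 2^-1 &
  forall rho x y, 0 < rho -> rho <= rho0 -> supp mu x ->
    fine (mu (cball x rho `&` cball y (eta * rho))) <= 4^-1 * mass x rho.
Proof.
have [eta eta01 Ceta] : exists2 eta : R, 0 < eta <= 2^-1 & C * eta `^ gam <= 4^-1.
  by apply: exists_powR_le; rewrite ?invr_gt0.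
have /andP[eta0 _] := eta01.
exists eta => // rho x y rho0' rhor sx.
have Bfin := abs_decay_cball_lty rho0' rhor sx.
have mS : measurable (cball x rho `&` cball y (eta * rho)).
  by apply: measurableI; exact: measurable_cball.
have Sfin := fin_num_measureS mS (measurable_cball x rho) (@subIsetl _ _ _) Bfin.
have Bfin' : mu (cball x rho) \is a fin_num by rewrite ge0_fin_numE.
have := abs_decay y rho0' rhor sx eta0.
rewrite -(fineK Sfin) -(fineK Bfin') -EFinM lte_fin => /ltW /le_trans; apply.
by apply: ler_wpM2r => //; exact: fine_ge0.
Qed.

Lemma abs_decay_federer : federer mu.
Proof.
have [eta /andP[eta0 eta2] quarter] := abs_decay_quarter.
exists rho0, (1 - eta), 2^-1; split => //; [apply/andP; split; lra|lra|].
move=> rho x rho0' rhor sx.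
rewrite ler_pdivlMr ?abs_decay_mass_gt0//.
have Bfin := abs_decay_cball_lty rho0' rhor sx.
have mI y r : measurable (cball x rho `&` cball y r).
  by apply: measurableI; exact: measurable_cball.
have fin A : A `<=` cball x rho -> measurable A -> mu A \is a fin_num.
  by move=> AB mA; exact: fin_num_measureS mA (measurable_cball x rho) AB Bfin.
have inner : cball x ((1 - eta) * rho) `<=` cball x rho.
  by apply: cball_subr; rewrite ler_piMl //; lra.
have cover : (mu (cball x rho) <= mu (cball x ((1 - eta) * rho)) +
    (mu (cball x rho `&` cball (x + rho) (eta * rho)) +
     mu (cball x rho `&` cball (x - rho) (eta * rho))))%E.
  apply: le_trans (le_measure _ _ _ (@cball_cover_ends _ x rho eta)) _; rewrite ?inE.
  - exact: measurable_cball.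
  - by apply: measurableU; [exact: measurable_cball|apply: measurableU].
  apply: le_trans (measureU2 _ _ _) _; [exact: measurable_cball|exact: measurableU|].
  by rewrite leeD2l// measureU2.
move: cover; rewrite -(fineK (fin _ inner (measurable_cball _ _))).
rewrite -(fineK (fin _ (@subIsetl _ _ _) (mI _ _))).
rewrite -(fineK (fin _ (@subIsetl _ _ _) (mI (x - rho) _))).
rewrite -(fineK (fin _ (@subset_refl _ _) (measurable_cball _ _))) -!EFinD lee_fin.
have := quarter rho x (x + rho) rho0' rhor sx; have := quarter rho x (x - rho) rho0' rhor sx.
lra.
Qed.

Lemma abs_decay_efd : efd mu.
Proof.
have [eta /andP[eta0 eta2] quarter] := abs_decay_quarter.
exists rho0, eta, 2^-1; split => //; [apply/andP; split; lra|lra|].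
move=> rho x rho0' rhor sx; rewrite ler_pdivrMr ?abs_decay_mass_gt0//.
have -> : cball x (eta * rho) = cball x rho `&` cball x (eta * rho).
  by rewrite setIidr//; apply: cball_subr; rewrite ler_piMl//; lra.
have := quarter rho x x rho0' rhor sx; have := abs_decay_mass_gt0 rho0' rhor sx; lra.
Qed.

End absolute_decay.

Lemma abs_decaying_federer_efd (R : realType) (mu : {measure set R -> \bar R}) :
  abs_decaying mu -> federer mu /\ efd mu.
Proof.
move=> [C [gam [C0 gam0 [rho0 rho00 decay]]]]; split.
- exact: (abs_decay_federer C0 gam0 rho00 decay).
- exact: (abs_decay_efd C0 gam0 rho00 decay).
Qed.

Section federer_and_efd.
Variables (R : realType) (mu : {measure set R -> \bar R}).
Variables (rF eF dF rE eE dE : R).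
Hypotheses (rF0 : 0 < rF) (rE0 : 0 < rE) (eF01 : 0 < eF < 1) (dF01 : 0 < dF < 1).
Hypotheses (eE01 : 0 < eE < 1) (dE01 : 0 < dE < 1).
Hypothesis federer_ratio : forall rho x : R, 0 < rho -> rho <= rF -> supp mu x ->
  dF <= fine (mu (cball x (eF * rho))) / fine (mu (cball x rho)).
Hypothesis efd_ratio : forall rho x : R, 0 < rho -> rho <= rE -> supp mu x ->
  fine (mu (cball x (eE * rho))) / fine (mu (cball x rho)) <= dE.

Local Notation mass x r := (fine (mu (cball x r))).

(* A ball of infinite measure has [fine] mass 0, so the Federer ratio would vanish. *)
Lemma federer_cball_lty rho x : 0 < rho -> rho <= rF -> supp mu x ->
  (mu (cball x rho) < +oo)%E /\ 0 < mass x rho.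
Proof.
move=> rho0 rhoF sx; have := federer_ratio rho0 rhoF sx.
have := cball_supp_gt0 sx rho0; have /andP[dF0 _] := dF01.
case: (mu (cball x rho)) => [r| |] //= r0; last by rewrite invr0 mulr0; lra.
by rewrite ltry -lte_fin.
Qed.

Lemma federer_mass_le z r s : 0 < r -> r <= s -> s <= rF -> supp mu z ->
  mass z r <= mass z s.
Proof.
move=> r0 rs sF sz; apply: fine_measure_le; try exact: measurable_cball.
  exact: cball_subr.
by have [] := federer_cball_lty (lt_le_trans r0 rs) sF sz.
Qed.

Lemma federer_iter m z r : 0 < r -> r <= rF -> supp mu z ->
  dF ^+ m * mass z r <= mass z (eF ^+ m * r).
Proof.
move=> r0 rF' sz; have /andP[eF0 eF1] := eF01; have /andP[dF0 _] := dF01.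
elim: m => [|m IH]; first by rewrite !expr0 !mul1r.
have s0 : 0 < eF ^+ m * r by rewrite mulr_gt0 ?exprn_gt0.
have sF : eF ^+ m * r <= rF.
  by rewrite (le_trans _ rF')// ler_piMl ?exprn_ile1// ltW.
have := federer_ratio s0 sF sz.
rewrite ler_pdivlMr; last by have [] := federer_cball_lty s0 sF sz.
rewrite !exprS -!mulrA => /(le_trans _); apply.
by apply: ler_wpM2l; first exact: ltW.
Qed.

Lemma efd_iter k z r : 0 < r -> r <= rE -> r <= rF -> supp mu z ->
  mass z (eE ^+ k * r) <= dE ^+ k * mass z r.
Proof.
move=> r0 rE' rF' sz; have /andP[eE0 eE1] := eE01; have /andP[dE0 _] := dE01.
elim: k => [|k IH]; first by rewrite !expr0 !mul1r.
have s0 : 0 < eE ^+ k * r by rewrite mulr_gt0 ?exprn_gt0.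
have s1 : eE ^+ k * r <= r by rewrite ler_piMl ?exprn_ile1// ltW.
have := efd_ratio s0 (le_trans s1 rE') sz.
rewrite ler_pdivrMr; last by have [] := federer_cball_lty s0 (le_trans s1 rF') sz.
rewrite !exprS -!mulrA => /le_trans; apply.
by apply: ler_wpM2l; first exact: ltW.
Qed.

Variable m : nat.
Hypothesis eFm : 3 * eF ^+ m <= 1.

Lemma federer_mass_triple rho x : 0 < rho -> 3 * rho <= rF -> supp mu x ->
  mass x (3 * rho) <= (dF ^+ m)^-1 * mass x rho.
Proof.
move=> rho0 rhoF sx; have /andP[dF0 _] := dF01; have /andP[eF0 _] := eF01.
have rho3 : 0 < 3 * rho by rewrite mulr_gt0.
rewrite ler_pdivlMl ?exprn_gt0//.
apply: le_trans (federer_iter m rho3 rhoF sx) _.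
apply: federer_mass_le; rewrite ?mulr_gt0 ?exprn_gt0//; last lra.
by rewrite mulrA -[leRHS]mul1r; apply: ler_wpM2r; [exact: ltW|rewrite mulrC].
Qed.

Lemma mass_cballI_le rho x y z eps k :
  0 < rho -> 3 * rho <= Num.min rF rE -> supp mu x -> supp mu z ->
  (cball x rho `&` cball y (eps * rho)) z -> 0 < eps <= eE ^+ k ->
  fine (mu (cball x rho `&` cball y (eps * rho))) <= dE ^+ k * ((dF ^+ m)^-1 * mass x rho).
Proof.
move=> rho0 + sx sz [xz yz] /andP[eps0 epsk]; rewrite le_min => /andP[rhoF rhoE].
have /andP[eE0 eE1] := eE01; have /andP[dE0 _] := dE01.
have t0 : 0 < 2 * rho by rewrite mulr_gt0.
have epst : 0 < eps * (2 * rho) by rewrite mulr_gt0.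
have epst' : eps * (2 * rho) <= eE ^+ k * (2 * rho) by rewrite ler_wpM2r// ltW.
have ekt : eE ^+ k * (2 * rho) <= 2 * rho by rewrite ler_piMl ?exprn_ile1// ltW.
have tF : 2 * rho <= rF by lra.
apply: (@le_trans _ _ (mass z (eps * (2 * rho)))).
  apply: fine_measure_le.
  - by apply: measurableI; exact: measurable_cball.
  - exact: measurable_cball.
  - apply: subset_trans (@subIsetr _ _ _) (cball_sub _).
    by move: yz; rewrite /cball /= distrC; lra.
  - by have [] := federer_cball_lty epst (le_trans epst' (le_trans ekt tF)) sz.
apply: le_trans (federer_mass_le epst epst' (le_trans ekt tF) sz) _.
have tE : 2 * rho <= rE by lra.
have /le_trans -> // := efd_iter k t0 tE tF sz.
apply: ler_wpM2l; first by rewrite exprn_ge0 ?ltW.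
apply: le_trans (federer_mass_triple rho0 rhoF sx).
apply: fine_measure_le; try exact: measurable_cball.
  by apply: cball_sub; move: xz; rewrite /cball /=; lra.
by have [] := federer_cball_lty (_ : 0 < 3 * rho) rhoF sx; rewrite ?mulr_gt0.
Qed.

Lemma mass_cballI_lt_powR rho x y z eps :
  0 < rho -> 3 * rho <= Num.min rF rE -> supp mu x -> supp mu z ->
  (cball x rho `&` cball y (eps * rho)) z -> 0 < eps < 1 ->
  fine (mu (cball x rho `&` cball y (eps * rho))) <
    2 / (dF ^+ m * dE) * eps `^ (ln dE / ln eE) * mass x rho.
Proof.
move=> rho0 rho3 sx sz Sz /andP[eps0 eps1].
have /andP[dF0 _] := dF01; have /andP[dE0 _] := dE01.
have [k /andP[ek1 ek]] : exists k : nat, eE ^+ k.+1 < eps <= eE ^+ k.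
  by apply: exists_expr_bracket; rewrite ?eps0.
have epsk : 0 < eps <= eE ^+ k by rewrite eps0.
apply: le_lt_trans (mass_cballI_le rho0 rho3 sx sz Sz epsk) _.
have rhoF : rho <= rF by move: rho3; rewrite le_min => /andP[? _]; lra.
have [_ Bpos] := federer_cball_lty rho0 rhoF sx.
have K0 : 0 < (dF ^+ m)^-1 * mass x rho by rewrite mulr_gt0 ?invr_gt0 ?exprn_gt0.
have := expr_le_powR_ln_ratio eE01 dE01 eps0 ek1.
set q := eps `^ _; have q0 : 0 < q by rewrite powR_gt0.
move=> /(ler_wpM2r (ltW K0)) /le_lt_trans; apply.
have -> : 2 / (dF ^+ m * dE) * q * mass x rho = 2 * (q / dE * ((dF ^+ m)^-1 * mass x rho)).
  by rewrite invfM; ring.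
have : 0 < q / dE * ((dF ^+ m)^-1 * mass x rho) by rewrite mulr_gt0 ?divr_gt0.
lra.
Qed.

Lemma federer_efd_abs_decaying_with :
  abs_decaying_with mu (2 / (dF ^+ m * dE)) (ln dE / ln eE).
Proof.
have /andP[dF0 dF1] := dF01; have /andP[dE0 dE1] := dE01.
have C2 : 2 <= 2 / (dF ^+ m * dE).
  rewrite ler_pdivlMr ?mulr_gt0 ?exprn_gt0// ler_piMr//.
  by rewrite mulr_ile1 ?exprn_ge0 ?exprn_ile1 ?ltW.
exists (Num.min rF rE / 3); first by rewrite divr_gt0// lt_min rF0.
move=> rho x y eps rho0 rhor sx eps0.
have rho3 : 3 * rho <= Num.min rF rE by rewrite mulrC -ler_pdivlMr.
have rhoF : rho <= rF by move: rho3; rewrite le_min => /andP[? _]; lra.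
have [Bfin Bpos] := federer_cball_lty rho0 rhoF sx.
set S := cball x rho `&` cball y (eps * rho).
have mS : measurable S by apply: measurableI; exact: measurable_cball.
have SB := fine_measure_le mS (measurable_cball x rho) (@subIsetl _ _ _) Bfin.
rewrite -(fineK (fin_num_measureS mS (measurable_cball x rho) (@subIsetl _ _ _) Bfin)).
rewrite -(fineK (_ : mu (cball x rho) \is a fin_num)) ?ge0_fin_numE// -EFinM lte_fin.
have q0 : 0 < eps `^ (ln dE / ln eE) by rewrite powR_gt0.
have [eps1|eps1] := lerP 1 eps.
  have q1 : 1 <= eps `^ (ln dE / ln eE).
    by rewrite -(powRr0 eps) ler_powR// ltW// ln_ratio_gt0.
  apply: le_lt_trans SB _; rewrite -[X in X < _]mul1r ltr_pM2r//.
  by apply: lt_le_trans (ler_peMr _ q1); lra.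
have [[z [Sz sz]]|nosupp] := pselect (exists z, S z /\ supp mu z).
  by apply: (mass_cballI_lt_powR rho0 rho3 sx sz Sz); rewrite eps0.
have -> : mu S = 0%E.
  apply: compact_measure0 => [||z Sz sz]; last by apply: nosupp; exists z.
  - by apply: compact_closedI; [exact: compact_cball|exact: closed_cball].
  - exact: mS.
by rewrite !mulr_gt0//; lra.
Qed.

End federer_and_efd.

Lemma federer_efd_abs_decaying (R : realType) (mu : {measure set R -> \bar R}) :
  federer mu -> efd mu -> abs_decaying mu.
Proof.
move=> [rF [eF [dF [rF0 eF01 dF01 federer_ratio]]]].
move=> [rE [eE [dE [rE0 eE01 dE01 efd_ratio]]]].
have [m eFm] : exists m : nat, eF ^+ m < 3^-1.
  by case/andP: eF01 => eF0 eF1; apply: exists_expr_lt; rewrite ?ltW.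
have /andP[dF0 _] := dF01; have /andP[dE0 _] := dE01.
exists (2 / (dF ^+ m * dE)), (ln dE / ln eE); split.
- by rewrite divr_gt0 ?mulr_gt0 ?exprn_gt0.
- exact: ln_ratio_gt0.
- apply: (federer_efd_abs_decaying_with rF0 rE0 eF01 dF01 eE01 dE01 federer_ratio efd_ratio).
  by rewrite mulrC -ler_pdivlMr// div1r ltW.
Qed.

Theorem proposition2p4 (R : realType) (mu : {measure set R -> \bar R}) :
  locally_finite mu -> (abs_decaying mu <-> federer mu /\ efd mu).
Proof.
move=> _; split; first exact: abs_decaying_federer_efd.
by case; exact: federer_efd_abs_decaying.
Qed.
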